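(* Let $G$ be a simple graph with $n$ vertices, let $G'$ be obtained from $G$ by a symmetric $\mathcal K_{xy}$-operation, and let $f:\mathbb R^n\to\mathbb R$ be a convex symmetric function. Then $f[G]\le f[G']$. In particular $\sum_{v\in V(G)}d(v,G)^s\le\sum_{v\in V(G')}d(v,G')^s$ for every positive integer $s$.
   Context: $d(v,G)$ is the degree of $v$ in $G$, and $f[G]=f(d(v_1,G),\dots,d(v_n,G))$ for any ordering $v_1,\dots,v_n$ of $V(G)$. A function $f:\mathbb R^n\to\mathbb R$ is symmetric if it is invariant under permuting coordinates; a symmetric $f$ is called convex if for all $x\in\mathbb R^n$ with nonnegative coordinates, all indices $r\ne s$ with $x_r\ge x_s$, and all $\varepsilon\ge0$, one has $f(x+\varepsilon e_r)\ge f(x+\varepsilon e_s)$ ($e_i$ the standard unit vectors). $\mathcal K_{xy}$-operation: let $G$ be a simple graph, $x\ne y$ vertices, $\mathcal K$ an induced subgraph of $G$ containing $x$ and $y$, and $N(v)$ the neighbourhood of $v$. Put $X=N(x)\setminus(V(\mathcal K)\cup N(y))$, $Y=N(y)\setminus(V(\mathcal K)\cup N(x))$, $[x,X]=\{xv:v\in X\}$, $[y,X]=\{yv:v\in X\}$, $[y,Y]=\{yv:v\in Y\}$. The graph $\mathcal K_{xy}(G)=(G-[x,X])\cup[y,X]$ (on the same vertex set) is obtained from $G$ by the $\mathcal K_{xy}$-operation. The operation is called symmetric if the graph $G-([x,X]\cup[y,Y])$ has an automorphism $\alpha$ with $\alpha(x)=y$, $\alpha(y)=x$, $\alpha(V(\mathcal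 K))=V(\mathcal K)$, and $\alpha(v)=v$ for every $v\in X\cup Y$. *)

From HB Require Import structures.
From mathcomp Require Import all_boot all_order all_algebra all_fingroup.
Set Implicit Arguments. Unset Strict Implicit. Unset Printing Implicit Defensive.
Import Order.TTheory GRing.Theory Num.Theory.

Definition simple_graph (T : finType) (e : rel T) : Prop :=
  symmetric e /\ irreflexive e.

Definition nbhd (T : finType) (e : rel T) (v : T) : {set T} := [set u | e v u].
Definition deg (T : finType) (e : rel T) (v : T) : nat := #|nbhd e v|.

Definition degvec (R : realFieldType) (T : finType) (e : rel T)
  : 'I_#|T| -> R := fun i => ((deg e (enum_val i))%:R)%R.

Definition sym_fun (R : realFieldType) (n : nat) (f : ('I_n -> R) -> R) : Prop :=
  forall (s : 'S_n) (x : 'I_n -> R), f (fun i => x (s i)) = f x.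

Definition addunit (R : realFieldType) (n : nat) (x : 'I_n -> R) (eps : R) (r : 'I_n)
  : 'I_n -> R := fun i => (x i + (if i == r then eps else 0))%R.

(* convexity in the sense of the paper *)
Definition convex_sym (R : realFieldType) (n : nat) (f : ('I_n -> R) -> R) : Prop :=
  forall (x : 'I_n -> R), (forall i, 0 <= x i)%R ->
  forall r s : 'I_n, r != s -> (x s <= x r)%R ->
  forall eps : R, (0 <= eps)%R -> (f (addunit x eps s) <= f (addunit x eps r))%R.

(* X = N(x) \ (V(K) ∪ N(y)) *)
Definition Kset (T : finType) (e : rel T) (K : {set T}) (x y : T) : {set T} :=
  nbhd e x :\: (K :|: nbhd e y).

(* indicator of the edge set [a, A] = {a v : v in A} *)
Definition star (T : finType) (a : T) (A : {set T}) (u v : T) : bool :=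
  ((u == a) && (v \in A)) || ((v == a) && (u \in A)).

(* K_xy(G) = (G - [x,X]) ∪ [y,X] *)
Definition Kop (T : finType) (e : rel T) (K : {set T}) (x y : T) : rel T :=
  fun u v => (e u v && ~~ star x (Kset e K x y) u v) || star y (Kset e K x y) u v.

(* G - ([x,X] ∪ [y,Y]) *)
Definition Kcore (T : finType) (e : rel T) (K : {set T}) (x y : T) : rel T :=
  fun u v => e u v && ~~ star x (Kset e K x y) u v && ~~ star y (Kset e K y x) u v.

Definition Kop_symmetric (T : finType) (e : rel T) (K : {set T}) (x y : T) : Prop :=
  exists alpha : {perm T},
    (forall u v, Kcore e K x y (alpha u) (alpha v) = Kcore e K x y u v) /\
    alpha x = y /\ alpha y = x /\ alpha @: K = K /\
    (forall v, v \in Kset e K x y :|: Kset e K y x -> alpha v = v).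

From HB Require Import structures.
From mathcomp Require Import all_boot all_order all_algebra all_fingroup.
From mathcomp Require Import lra.
From Stdlib Require Import FunctionalExtensionality.
Import Order.TTheory GRing.Theory Num.Theory.
Set Implicit Arguments. Unset Strict Implicit.

(* Let G be a simple graph, X = N(x) \ (K ∪ N(y)), Y = N(y) \ (K ∪ N(x)) and
   H = G - ([x,X] ∪ [y,Y]) the core graph.  Put c = d(x,H).
   1. Degree bookkeeping: d(x,G) = c + |X|, d(y,G) = d(y,H) + |Y|; in
      G' = K_xy(G) the vertex x has degree c, y gains exactly |X| new
      neighbours, each v ∈ X swaps its neighbour x for y, and every other
      vertex keeps its neighbourhood.
   2. Symmetry: the automorphism of H exchanging x and y gives d(y,H) = c.
   3. Hence with the "base" degrees b (b(x) = c, b(y) = c + |Y|, b(v) = d(v,G)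
      otherwise) the degree vector of G is b + |X| e_x and that of G' is
      b + |X| e_y.  Since b(x) <= b(y), convexity of f gives f[G] <= f[G'].
   4. The power sum z |-> Σ z_i^s is convex in the sense of the paper, so the
      second claim is the first one applied to it over the rationals and
      transported back to the natural numbers. *)

Section KopDegrees.
Variables (T : finType) (e : rel T) (K : {set T}) (x y : T).
Hypotheses (e_sym : symmetric e) (x_neq_y : x != y) (xK : x \in K) (yK : y \in K).

Let X := Kset e K x y.
Let Y := Kset e K y x.
Let H := Kcore e K x y.
Let G' := Kop e K x y.

Lemma inX u : (u \in X) = [&& e x u, u \notin K & ~~ e y u].
Proof. by rewrite !inE negb_or; case: (e x u); case: (u \in K); case: (e y u). Qed.

Lemma inY u : (u \in Y) = [&& e y u, u \notin K & ~~ e x u].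
Proof. by rewrite !inE negb_or; case: (e x u); case: (u \in K); case: (e y u). Qed.

Lemma x_notin_X : x \notin X. Proof. by rewrite inX xK andbF. Qed.
Lemma y_notin_X : y \notin X. Proof. by rewrite inX yK andbF. Qed.
Lemma x_notin_Y : x \notin Y. Proof. by rewrite inY xK andbF. Qed.
Lemma y_notin_Y : y \notin Y. Proof. by rewrite inY yK andbF. Qed.

Lemma nbhd_core_x : nbhd H x = nbhd e x :\: X.
Proof.
apply/setP=> u; rewrite !inE /H /Kcore /star eqxx (negbTE x_neq_y) -/X -/Y.
rewrite (negbTE x_notin_Y) (negbTE x_notin_X) !andbF !orbF /= inX.
by case: (e x u); case: (u \in K); case: (e y u).
Qed.

Lemma nbhd_core_y : nbhd H y = nbhd e y :\: Y.
Proof.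
apply/setP=> u; rewrite !inE /H /Kcore /star eqxx eq_sym (negbTE x_neq_y) -/X -/Y.
rewrite (negbTE y_notin_Y) (negbTE y_notin_X) !andbF !orbF /= inY.
by case: (e x u); case: (u \in K); case: (e y u).
Qed.

Lemma deg_x_core : deg e x = deg H x + #|X|.
Proof.
have sub : X \subset nbhd e x by apply/subsetP=> u; rewrite inX inE => /andP[].
by rewrite /deg nbhd_core_x cardsD (setIidPr sub) subnK // subset_leq_card.
Qed.

Lemma deg_y_core : deg e y = deg H y + #|Y|.
Proof.
have sub : Y \subset nbhd e y by apply/subsetP=> u; rewrite inY inE => /andP[].
by rewrite /deg nbhd_core_y cardsD (setIidPr sub) subnK // subset_leq_card.
Qed.

Lemma deg_Kop_x : deg G' x = deg H x.
Proof.
rewrite /deg nbhd_core_x; apply: eq_card => u.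
rewrite !inE /G' /Kop /star eqxx (negbTE x_neq_y) -/X (negbTE x_notin_X) !andbF !orbF.
by rewrite /= inX; case: (e x u); case: (u \in K); case: (e y u).
Qed.

Lemma deg_Kop_y : deg G' y = deg e y + #|X|.
Proof.
rewrite /deg; have -> : nbhd G' y = nbhd e y :|: X.
  apply/setP=> u; rewrite !inE /G' /Kop /star eqxx eq_sym (negbTE x_neq_y) -/X.
  rewrite (negbTE y_notin_X) !andbF !orbF /= andbT inX.
  by case: (e x u); case: (u \in K); case: (e y u).
have disj : nbhd e y :&: X = set0.
  by apply/setP=> u; rewrite !inE negb_or; case: (e y u); rewrite ?andbF.
by rewrite cardsU disj cards0 subn0.
Qed.

(* A vertex of X exchanges its neighbour x for the new neighbour y. *)
Lemma deg_Kop_X v : v \in X -> deg G' v = deg e v.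
Proof.
move=> vX; have := vX; rewrite inX => /and3P[exv _ Neyv].
have vx : v != x by apply: contraNneq x_notin_X => <-.
have vy : v != y by apply: contraNneq y_notin_X => <-.
rewrite /deg; have -> : nbhd G' v = y |: (nbhd e v :\ x).
  apply/setP=> u; rewrite !inE /G' /Kop /star (negbTE vx) (negbTE vy) -/X vX.
  by case: (u == y); rewrite /= ?andbT ?orbF ?orbT // andbC.
rewrite cardsU1 !inE e_sym (negbTE Neyv) andbF add1n.
by rewrite [RHS](cardsD1 x) inE e_sym exv.
Qed.

Lemma deg_Kop_other v : v != x -> v != y -> deg G' v = deg e v.
Proof.
move=> vx vy; have [/deg_Kop_X //|vX] := boolP (v \in X).
apply: eq_card => u; rewrite !inE /G' /Kop /star (negbTE vx) (negbTE vy) -/X.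
by rewrite (negbTE vX) !andbF !orbF andbT.
Qed.

(* An automorphism of H swapping x and y maps N_H(x) bijectively onto N_H(y). *)
Lemma deg_core_sym : Kop_symmetric e K x y -> deg H x = deg H y.
Proof.
case=> a [a_auto [ax [ay _]]].
have nbhd_a : nbhd H y = a @: nbhd H x.
  rewrite -ax /H; apply/setP=> w; rewrite inE; apply/idP/imsetP.
  - by move=> Hw; exists ((a^-1)%g w); rewrite ?permKV // inE -a_auto permKV.
  - by case=> u; rewrite inE => Hu ->; rewrite a_auto.
by rewrite /deg nbhd_a card_imset //; apply: perm_inj.
Qed.

Hypothesis K_sym : Kop_symmetric e K x y.

(* Base degrees b: the common part of the degree vectors of G and G'. *)
Definition base_deg (v : T) : nat :=
  if v == x then deg H x else if v == y then deg H x + #|Y| else deg e v.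

Lemma base_deg_le : base_deg x <= base_deg y.
Proof. by rewrite /base_deg eqxx eq_sym (negbTE x_neq_y) eqxx leq_addr. Qed.

Lemma deg_base v : deg e v = base_deg v + (v == x) * #|X|.
Proof.
rewrite /base_deg; case: eqP => [->|_]; first by rewrite deg_x_core mul1n.
by case: eqP => [->|_]; rewrite ?deg_y_core ?(deg_core_sym K_sym) mul0n addn0.
Qed.

Lemma deg_Kop_base v : deg G' v = base_deg v + (v == y) * #|X|.
Proof.
rewrite /base_deg; case: eqP => [->|/eqP vx].
  by rewrite (negbTE x_neq_y) mul0n addn0 deg_Kop_x.
case: eqP => [->|/eqP vy]; last by rewrite mul0n addn0 deg_Kop_other.
by rewrite mul1n deg_Kop_y deg_y_core (deg_core_sym K_sym).
Qed.

End KopDegrees.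

Lemma degvec_shift (R : realFieldType) (T : finType) (e : rel T)
    (b : T -> nat) (v : T) (d : nat) :
  (forall u, deg e u = b u + (u == v) * d) ->
  degvec R e = addunit (fun i => (b (enum_val i))%:R)%R d%:R%R (enum_rank v).
Proof.
move=> deg_b; apply: functional_extensionality => i.
rewrite /degvec /addunit deg_b natrD -[i]enum_valK (inj_eq enum_rank_inj) enum_rankK.
by case: (enum_val i == v); rewrite ?mul1n ?mul0n.
Qed.

Lemma Kop_convex_le (T : finType) (e : rel T) (x y : T) (K : {set T})
    (R : realFieldType) (f : ('I_#|T| -> R) -> R) :
  symmetric e -> x != y -> x \in K -> y \in K -> Kop_symmetric e K x y ->
  convex_sym f -> (f (degvec R e) <= f (degvec R (Kop e K x y)))%R.
Proof.
move=> e_sym x_neq_y xK yK K_sym f_convex.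
rewrite (degvec_shift R (deg_base x_neq_y xK yK K_sym)).
rewrite (degvec_shift R (deg_Kop_base e_sym x_neq_y xK yK K_sym)).
apply: f_convex => [i|||]; rewrite ?ler0n //.
- by rewrite (inj_eq enum_rank_inj) eq_sym.
- by rewrite !enum_rankK ler_nat base_deg_le.
Qed.

Section PowerSum.
Local Open Scope ring_scope.
Variables (R : realFieldType) (n k : nat).

Definition powsum (z : 'I_n -> R) : R := \sum_i z i ^+ k.

Lemma powsum_addunit z d r :
  powsum (addunit z d r) = powsum z - z r ^+ k + (z r + d) ^+ k.
Proof.
rewrite /powsum (bigD1 r) //= [in RHS](bigD1 r) //= /addunit eqxx.
rewrite (eq_bigr (fun i => z i ^+ k)) => [|i /negbTE ->]; last by rewrite addr0.
by rewrite [X in _ = X - _ + _]addrC addrK addrC.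
Qed.

(* The increment (t + d)^k - t^k is nondecreasing in t >= 0; by induction on k
   via (t + d)^(k+1) - t^(k+1) = (t + d)((t + d)^k - t^k) + d t^k. *)
Lemma pow_increment_mono (a b d : R) :
  0 <= a -> a <= b -> 0 <= d -> (a + d) ^+ k - a ^+ k <= (b + d) ^+ k - b ^+ k.
Proof.
move=> a0 ab d0; have b0 : 0 <= b by apply: le_trans ab.
have mono m u v : 0 <= u -> u <= v -> u ^+ m <= v ^+ m.
  by move=> u0 uv; apply: lerXn2r; rewrite // nnegrE (le_trans u0).
elim: k => [|m IH]; first by rewrite !subrr.
have ad_a : a ^+ m <= (a + d) ^+ m by apply: mono; rewrite ?lerDl.
have a_b : a ^+ m <= b ^+ m by apply: mono.
rewrite !exprS; nra.
Qed.

(* Adding d to a larger coordinate increases the power sum more. *)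
Lemma powsum_convex : convex_sym powsum.
Proof.
move=> z z0 r s _ zsr d d0; rewrite !powsum_addunit.
have := pow_increment_mono (z0 s) zsr d0; lra.
Qed.

End PowerSum.

Lemma powsum_degvec (R : realFieldType) (T : finType) (e : rel T) (k : nat) :
  powsum k (degvec R e) = ((\sum_v deg e v ^ k)%N%:R)%R.
Proof.
by rewrite natr_sum big_enum_val /powsum; apply: eq_bigr => i _; rewrite natrX.
Qed.

Lemma Kop_powsum_le (T : finType) (e : rel T) (x y : T) (K : {set T}) (k : nat) :
  symmetric e -> x != y -> x \in K -> y \in K -> Kop_symmetric e K x y ->
  \sum_(v : T) deg e v ^ k <= \sum_(v : T) deg (Kop e K x y) v ^ k.
Proof.
move=> e_sym x_neq_y xK yK K_sym; rewrite -(ler_nat rat) -!(powsum_degvec rat).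
exact: Kop_convex_le (@powsum_convex rat _ k).
Qed.

Theorem mainTheorem15 (T : finType) (e : rel T) (x y : T) (K : {set T}) :
  simple_graph e -> x != y -> x \in K -> y \in K ->
  Kop_symmetric e K x y ->
  (forall (R : realFieldType) (f : ('I_#|T| -> R) -> R),
      sym_fun f -> convex_sym f ->
      (f (degvec R e) <= f (degvec R (Kop e K x y)))%R) /\
  (forall s : nat, 0 < s ->
      \sum_(v : T) deg e v ^ s <= \sum_(v : T) deg (Kop e K x y) v ^ s).
Proof.
move=> [e_sym _] x_neq_y xK yK K_sym; split.
- by move=> R f _; apply: Kop_convex_le.
- by move=> s _; apply: Kop_powsum_le.
Qed.
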